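(* Let $\mathcal{D}(\cdot)$ be a location-scale family on a convex set $\Theta\subseteq\mathbb{R}^d$, $z_\theta\sim\mathcal{D}(\theta)\iff z_\theta\overset{d}{=}(\Sigma_0+\Sigma(\theta))z_0+\mu_0+\mu\theta$, let $g:\mathbb{R}^m\to\mathbb{R}$, and let $\gamma_z\geq 0$. Suppose that for all $\theta,\theta'\in\Theta$ and $\alpha\in(0,1)$, $$\mathbb{E}_{z\sim\mathcal{D}(\alpha\theta+(1-\alpha)\theta')}[g(z)]\leq\mathbb{E}_{z\sim\alpha\mathcal{D}(\theta)+(1-\alpha)\mathcal{D}(\theta')}[g(z)]-\frac{\alpha(1-\alpha)\gamma_z}{2}\mathbb{E}\|\Sigma(\theta-\theta')z_0+\mu(\theta-\theta')\|_2^2.$$ Then for all $\theta,\theta'\in\Theta$ such that $\theta\mapsto\mathbb{E}_{z\sim\mathcal{D}(\theta)}[g(z)]$ is differentiable at $\theta$, $$\mathbb{E}_{z\sim\mathcal{D}(\theta')}[g(z)]\geq\mathbb{E}_{z\sim\mathcal{D}(\theta)}[g(z)]+\big(\nabla_\theta\mathbb{E}_{z\sim\mathcal{D}(\theta)}[g(z)]\big)^\top(\theta'-\theta)+\frac{\gamma_z}{2}\mathbb{E}\|\Sigma(\theta-\theta')z_0+\mu(\theta-\theta')\|_2^2.$$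
   Context: Location-scale family: $z_0\sim\mathcal{D}_0$ is drawn from a fixed zero-mean distribution $\mathcal{D}_0$ on $\mathbb{R}^m$ with finite second moments, $\Sigma_0\in\mathbb{R}^{m\times m}$, $\mu_0\in\mathbb{R}^m$ fixed, $\mu:\mathbb{R}^d\to\mathbb{R}^m$ and $\Sigma:\mathbb{R}^d\to\mathbb{R}^{m\times m}$ linear maps; expectations $\mathbb{E}\|\cdot\|$ are over $z_0\sim\mathcal{D}_0$, and all expectations of $g$ are assumed finite. $\alpha\mathcal{D}(\theta)+(1-\alpha)\mathcal{D}(\theta')$ denotes the mixture distribution. *)

From HB Require Import structures.
From mathcomp Require Import all_boot all_order all_algebra.
From mathcomp Require Import all_classical all_reals all_analysis.
Set Implicit Arguments. Unset Strict Implicit. Unset Printing Implicit Defensive.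
Import Order.TTheory GRing.Theory Num.Theory.
Import numFieldNormedType.Exports.
Local Open Scope classical_set_scope.
Local Open Scope ring_scope.

Definition sqnorm {R : realType} {m : nat} (v : 'cV[R]_m) : R :=
  \sum_(i < m) (v i ord0) ^+ 2.

Definition convex_setR {R : realType} {d : nat} (Th : set 'cV[R]_d) : Prop :=
  forall x y a, Th x -> Th y -> 0 <= a <= 1 -> Th (a *: x + (1 - a) *: y).

Definition ls_point {R : realType} {d m : nat}
  (Sigma0 : 'M[R]_m) (Sigma : {linear 'cV[R]_d -> 'M[R]_m})
  (mu0 : 'cV[R]_m) (mu : 'M[R]_(m, d)) (th : 'cV[R]_d) (z : 'cV[R]_m) : 'cV[R]_m :=
  (Sigma0 + Sigma th) *m z + mu0 + mu *m th.

(* E_{z ~ D(theta)}[g(z)], where D0 is the law of the random vector z0 on (Omega,P) *)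
Definition Eg {R : realType} {d0 : measure_display} {Omega : measurableType d0}
  (P : probability Omega R) {d m : nat} (z0 : Omega -> 'cV[R]_m)
  (Sigma0 : 'M[R]_m) (Sigma : {linear 'cV[R]_d -> 'M[R]_m})
  (mu0 : 'cV[R]_m) (mu : 'M[R]_(m, d)) (g : 'cV[R]_m -> R) (th : 'cV[R]_d) : R :=
  Rintegral P setT (fun w => g (ls_point Sigma0 Sigma mu0 mu th (z0 w))).

Definition Eg_mix {R : realType} {d0 : measure_display} {Omega : measurableType d0}
  (P : probability Omega R) {d m : nat} (z0 : Omega -> 'cV[R]_m)
  (Sigma0 : 'M[R]_m) (Sigma : {linear 'cV[R]_d -> 'M[R]_m})
  (mu0 : 'cV[R]_m) (mu : 'M[R]_(m, d)) (g : 'cV[R]_m -> R)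
  (a : R) (th th' : 'cV[R]_d) : R :=
  a * Eg P z0 Sigma0 Sigma mu0 mu g th + (1 - a) * Eg P z0 Sigma0 Sigma mu0 mu g th'.

Definition Enorm {R : realType} {d0 : measure_display} {Omega : measurableType d0}
  (P : probability Omega R) {d m : nat} (z0 : Omega -> 'cV[R]_m)
  (Sigma : {linear 'cV[R]_d -> 'M[R]_m}) (mu : 'M[R]_(m, d)) (v : 'cV[R]_d) : R :=
  Rintegral P setT (fun w => sqnorm (Sigma v *m z0 w + mu *m v)).

From HB Require Import structures.
From mathcomp Require Import all_boot all_order all_algebra.
From mathcomp Require Import all_classical all_reals all_analysis.
From mathcomp Require Import ring lra.
Import Order.TTheory GRing.Theory Num.Theory.
Import numFieldNormedType.Exports.
Local Open Scope classical_set_scope.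
Local Open Scope ring_scope.

(* Along the segment from th to th', the strong convexity hypothesis says that
   the difference quotient (F (th + t (th' - th)) - F th) / t is at most
   F th' - F th - (1 - t) k, where k is the strong convexity term; letting
   t -> 0+ bounds the directional derivative by F th' - F th - k. *)

Section FirstOrderStrongConvexity.
Variable R : realType.

Definition strongly_convex_wrt {V : lmodType R} (Th : set V) (F : V -> R)
    (D : V -> V -> R) : Prop :=
  forall x y a, Th x -> Th y -> 0 < a < 1 ->
    F (a *: x + (1 - a) *: y) <= a * F x + (1 - a) * F y - a * (1 - a) * D x y.

Lemma differential_right_quotient_cvg {V W : normedModType R} (F : V -> W)
    (x v : V) :
  differentiable F x ->
  (fun t : R => t^-1 *: (F (t *: v + x) - F x)) @ 0^'+ --> 'd F x v.
Proof.
move=> dF.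
have quotient_cvg : (fun t : R => t^-1 *: (F (t *: v + x) - F x)) @ 0^'
    --> 'd F x v.
  by rewrite -deriveE //; exact: diff_derivable.
apply: cvg_trans quotient_cvg; apply: cvg_app.
by apply: within_subset => t /= t_gt0; rewrite gt_eqF.
Qed.

Lemma differential_le_of_right_quotient {V : normedModType R} (F : V -> R)
    (x v : V) (G : R -> R) (l : R) :
  differentiable F x -> G @ 0^'+ --> l ->
  (\forall t \near 0^'+, t^-1 * (F (t *: v + x) - F x) <= G t) ->
  'd F x v <= l.
Proof.
move=> dF Gl le_quotient_G.
have Gl_sub := cvgB Gl (differential_right_quotient_cvg F x v dF).
rewrite -subr_ge0; apply: (cvgr_to_ge (Gl_sub _)).
by apply: filterS le_quotient_G => t /=; rewrite subr_ge0.
Qed.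

Lemma strongly_convex_chord {V : lmodType R} (Th : set V) (F : V -> R)
    (D : V -> V -> R) (x y : V) (t : R) :
  strongly_convex_wrt Th F D -> Th x -> Th y -> 0 < t < 1 ->
  F (t *: (y - x) + x) - F x <= t * (F y - F x - (1 - t) * D x y).
Proof.
move=> convF Thx Thy /andP[t_gt0 t_lt1].
have t1_range : 0 < 1 - t < 1 by apply/andP; split; lra.
have := convF x y (1 - t) Thx Thy t1_range.
rewrite subKr.
have -> : (1 - t) *: x + t *: y = t *: (y - x) + x.
  by rewrite scalerBl scalerBr scale1r addrC addrA addrAC.
move=> le_chord.
rewrite -(lerD2r (F x)) subrK.
have -> : t * (F y - F x - (1 - t) * D x y) + F x
    = (1 - t) * F x + t * F y - (1 - t) * t * D x y by ring.
exact: le_chord.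
Qed.

Lemma strongly_convex_first_order {V : normedModType R} (Th : set V)
    (F : V -> R) (D : V -> V -> R) (x y : V) :
  strongly_convex_wrt Th F D -> Th x -> Th y -> differentiable F x ->
  F x + 'd F x (y - x) + D x y <= F y.
Proof.
move=> convF Thx Thy dF.
pose G t := F y - F x - (1 - t) * D x y.
suff : 'd F x (y - x) <= G 0 by rewrite /G subr0 mul1r; lra.
have Gl : G @ 0^'+ --> G 0.
  apply: cvg_at_right_filter; apply: cvgB; first exact: cvg_cst.
  apply: cvgM; last exact: cvg_cst.
  by apply: cvgB; [exact: cvg_cst | exact: cvg_id].
apply: (differential_le_of_right_quotient F x (y - x) G) => //.
near=> t.
have t_gt0 : 0 < t by near: t; exact: nbhs_right_gt.
have t_lt1 : t < 1 by near: t; exact: nbhs_right_lt ltr01.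
have t_range : 0 < t < 1 by rewrite t_gt0 t_lt1.
rewrite ler_pdivrMl //.
exact: strongly_convex_chord convF Thx Thy t_range.
Unshelve. all: by end_near.
Qed.

End FirstOrderStrongConvexity.

Theorem lemmaC1 (R : realType) (d0 : measure_display) (Omega : measurableType d0)
  (P : probability Omega R) (d m : nat) (z0 : Omega -> 'cV[R]_m)
  (Sigma0 : 'M[R]_m) (Sigma : {linear 'cV[R]_d -> 'M[R]_m})
  (mu0 : 'cV[R]_m) (mu : 'M[R]_(m, d)) (g : 'cV[R]_m -> R)
  (Th : set 'cV[R]_d) (gamma_z : R) :
  (* z0 ~ D0 : measurable, zero mean, finite second moments *)
  (forall i : 'I_m, measurable_fun setT (fun w => z0 w i ord0)) ->
  (forall i : 'I_m, P.-integrable setT (fun w => ((z0 w i ord0) ^+ 2)%:E)) ->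
  (forall i : 'I_m, Rintegral P setT (fun w => z0 w i ord0) = 0) ->
  (* all expectations of g are finite *)
  (forall th : 'cV[R]_d, P.-integrable setT
      (fun w => (g (ls_point Sigma0 Sigma mu0 mu th (z0 w)))%:E)) ->
  convex_setR Th ->
  0 <= gamma_z ->
  (forall th th' a, Th th -> Th th' -> 0 < a < 1 ->
     Eg P z0 Sigma0 Sigma mu0 mu g (a *: th + (1 - a) *: th')
     <= Eg_mix P z0 Sigma0 Sigma mu0 mu g a th th'
        - a * (1 - a) * gamma_z / 2 * Enorm P z0 Sigma mu (th - th')) ->
  forall th th', Th th -> Th th' ->
    differentiable (Eg P z0 Sigma0 Sigma mu0 mu g) th ->
    Eg P z0 Sigma0 Sigma mu0 mu g th'
    >= Eg P z0 Sigma0 Sigma mu0 mu g th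
       + 'd (Eg P z0 Sigma0 Sigma mu0 mu g) th (th' - th)
       + gamma_z / 2 * Enorm P z0 Sigma mu (th - th').
Proof.
(* The argument only uses the strong convexity inequality. *)
move=> _ _ _ _ _ _ strong_conv th th' Thth Thth' dF.
apply: (strongly_convex_first_order _ Th (Eg P z0 Sigma0 Sigma mu0 mu g)
  (fun x y => gamma_z / 2 * Enorm P z0 Sigma mu (x - y))) => //.
move=> x y a Thx Thy a_range.
by rewrite 2!mulrA; exact: strong_conv.
Qed.
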